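(* Let $A\in\mathrm{GL}_{n}(\mathbb{Z})$ be diagonalizable over $\mathbb{C}$ and have no eigenvalue of absolute value $1$. Then every length function $l$ on $G=\mathbb{Z}^{n}\rtimes_{A}\mathbb{Z}$ vanishes on $\mathbb{Z}^{n}$.
   Context: $\mathbb{Z}^{n}\rtimes_{A}\mathbb{Z}$ is the semidirect product in which a generator of $\mathbb{Z}$ acts on $\mathbb{Z}^n$ by $A$. A length function on a group $G$ is a function $l:G\to[0,\infty)$ such that $l(g^{n})=|n|\,l(g)$ for all $g\in G,n\in\mathbb{Z}$; $l(hgh^{-1})=l(g)$ for all $g,h$; and $l(ab)\leq l(a)+l(b)$ whenever $a,b$ commute. *)

From mathcomp Require Import all_boot all_order all_algebra.
From mathcomp Require Import algC.
From mathcomp Require Import reals.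
Set Implicit Arguments. Unset Strict Implicit. Unset Printing Implicit Defensive.
Import Order.TTheory GRing.Theory Num.Theory.
Local Open Scope ring_scope.

(* Integer powers A^k (k : int) of a square integer matrix A; for k < 0 this
   uses invmx A, which is the genuine inverse when A \in unitmx (A in GL_n(Z)). *)
Definition mxZpow (n : nat) (A : 'M[int]_n) (k : int) : 'M[int]_n :=
  match k with
  | Posz m => iter m (mulmx A) 1%:M
  | Negz m => iter m.+1 (mulmx (invmx A)) 1%:M
  end.

(* Elements of G = Z^n ⋊_A Z are pairs (v, k), v in Z^n (column vectors), k in Z;
   the generator of Z acts on Z^n by v |-> A v, so
   (v, k) * (w, m) = (v + A^k w, k + m). *)
Definition sdp (n : nat) := ('cV[int]_n * int)%type.

Definition sdp_one (n : nat) : sdp n := (0, 0).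

Definition sdp_mul (n : nat) (A : 'M[int]_n) (g h : sdp n) : sdp n :=
  (g.1 + mxZpow A g.2 *m h.1, g.2 + h.2).

Definition sdp_inv (n : nat) (A : 'M[int]_n) (g : sdp n) : sdp n :=
  (- (mxZpow A (- g.2) *m g.1), - g.2).

Definition sdp_pow (n : nat) (A : 'M[int]_n) (g : sdp n) (k : int) : sdp n :=
  match k with
  | Posz m => iter m (sdp_mul A g) (sdp_one n)
  | Negz m => iter m.+1 (sdp_mul A (sdp_inv A g)) (sdp_one n)
  end.

Definition length_function (R : realType) (n : nat) (A : 'M[int]_n)
    (l : sdp n -> R) : Prop :=
  [/\ (forall g, 0 <= l g),
      (forall g (k : int), l (sdp_pow A g k) = `|k|%:~R * l g),
      (forall g h, l (sdp_mul A (sdp_mul A h g) (sdp_inv A h)) = l g)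
    & (forall a b, sdp_mul A a b = sdp_mul A b a ->
                   l (sdp_mul A a b) <= l a + l b)].

Definition mxC (n : nat) (A : 'M[int]_n) : 'M[algC]_n := map_mx intr A.

From mathcomp Require Import all_boot all_order all_algebra.
From mathcomp Require Import algC reals ring.
Set Implicit Arguments. Unset Strict Implicit. Unset Printing Implicit Defensive.
Import Order.TTheory GRing.Theory Num.Theory.
Local Open Scope ring_scope.

(* Write A = P^-1 diag(mu) P over the algebraic numbers. Since no |mu_i| is 1,
   for k large every mu_i^k is either tiny or huge, so the characteristic
   polynomial prod_i (X - mu_i^k) of A^k is C (X^s + E) with the l1-norm of E
   below 1: its integer coefficient at X^s dominates the sum of the absolute
   values of all the others. A length function restricts to a seminorm L on
   Z^n that is invariant under A (conjugation by the generator of Z), so the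
   Cayley-Hamilton relation p(A^k) v = 0 yields
   |p_s| L v <= (sum_(j != s) |p_j|) L v, which forces L v = 0. *)

Section CoefNorm.
Variable R : numDomainType.
Implicit Types (p q : {poly R}) (c : R).

Definition coef_norm1 p := \sum_(0 <= i < size p) `|p`_i|.

Lemma coef_norm1_widen N p :
  (size p <= N)%N -> coef_norm1 p = \sum_(0 <= i < N) `|p`_i|.
Proof.
move=> le_pN; rewrite /coef_norm1 (big_cat_nat (leq0n _) le_pN) /=.
rewrite [X in _ = _ + X]big1_seq ?addr0 // => i /andP[_].
by rewrite mem_index_iota => /andP[le_pi _]; rewrite nth_default ?normr0.
Qed.

Lemma sum_normr_coef_le_norm1 N p : \sum_(0 <= i < N) `|p`_i| <= coef_norm1 p.
Proof.
rewrite (coef_norm1_widen (leq_maxr N (size p))).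
rewrite (big_cat_nat (leq0n _) (leq_maxl N (size p))) /= lerDl.
by apply: sumr_ge0 => i _.
Qed.

Lemma normr_coef_le_norm1 p i : `|p`_i| <= coef_norm1 p.
Proof.
apply: le_trans (sum_normr_coef_le_norm1 i.+1 p); rewrite big_nat_recr //= lerDr.
by apply: sumr_ge0 => j _.
Qed.

Lemma coef_norm1_0 : coef_norm1 0 = 0.
Proof. by rewrite /coef_norm1 size_poly0 big_geq. Qed.

Lemma coef_norm1D p q : coef_norm1 (p + q) <= coef_norm1 p + coef_norm1 q.
Proof.
set N := maxn (size p) (size q).
have le_pN : (size p <= N)%N by rewrite leq_maxl.
have le_qN : (size q <= N)%N by rewrite leq_maxr.
have le_pqN : (size (p + q)%R <= N)%N.
  by rewrite (leq_trans (size_polyD _ _)) // geq_max le_pN le_qN.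
rewrite !(coef_norm1_widen le_pN, coef_norm1_widen le_qN, coef_norm1_widen le_pqN).
by rewrite -big_split /=; apply: ler_sum => i _; rewrite coefD ler_normD.
Qed.

Lemma coef_norm1Z c p : coef_norm1 (c *: p) = `|c| * coef_norm1 p.
Proof.
rewrite (coef_norm1_widen (size_scale_leq c p)) /coef_norm1 mulr_sumr.
by apply: eq_bigr => i _; rewrite coefZ normrM.
Qed.

Lemma coef_norm1MX p : coef_norm1 (p * 'X) = coef_norm1 p.
Proof.
have le_pX : (size (p * 'X)%R <= (size p).+1)%N.
  by rewrite (leq_trans (size_polyMleq _ _)) // size_polyX addn2.
rewrite (coef_norm1_widen le_pX) big_nat_recl // coefMX eqxx normr0 add0r.
by apply: eq_bigr => i _; rewrite coefMX.
Qed.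

Lemma coef_norm1Xn s : coef_norm1 'X^s = 1.
Proof.
rewrite /coef_norm1 size_polyXn big_nat_recr //= coefXn eqxx normr1.
rewrite big1_seq ?add0r // => i /andP[_].
by rewrite mem_index_iota => /andP[_ lt_is]; rewrite coefXn ltn_eqF ?normr0.
Qed.

Definition dominant_coef p s :=
  \sum_(0 <= j < size p | j != s) `|p`_j| < `|p`_s|.

Lemma dominant_coef_size p s : dominant_coef p s -> (s < size p)%N.
Proof.
rewrite /dominant_coef ltnNge; apply: contraTN => le_ps.
by rewrite nth_default // normr0 le_gtF // sumr_ge0.
Qed.

End CoefNorm.

Lemma dominant_coef_map_int (R : numDomainType) (p : {poly int}) s :
  dominant_coef (map_poly intr p : {poly R}) s = dominant_coef p s.
Proof.
rewrite /dominant_coef size_map_inj_poly //; last exact: intr_inj.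
rewrite coef_map /= -intr_norm.
under eq_bigr do rewrite coef_map /= -intr_norm.
by rewrite -rmorph_sum ltr_int.
Qed.

Section NearMonomial.
Variable F : numFieldType.
Implicit Types (x mu C : F) (E : {poly F}).

Definition min_normV x := if `|x| <= 1 then `|x| else `|x|^-1.

Lemma min_normV_ge0 x : 0 <= min_normV x.
Proof. by rewrite /min_normV; case: ifP; rewrite ?invr_ge0. Qed.

Lemma min_normV_lt1 x : `|x| != 1 -> min_normV x < 1.
Proof.
rewrite /min_normV; case: ifPn => [x_le1 x_ne1|]; first by rewrite lt_neqAle x_ne1.
rewrite -real_ltNge ?realE ?normr_ge0 ?ler01 // => x_gt1.
by rewrite invf_lt1 // (lt_trans ltr01).
Qed.

Lemma min_normVX x k : min_normV (x ^+ k) = min_normV x ^+ k.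
Proof.
rewrite /min_normV normrX; have [x_le1|x_nle1] := boolP (`|x| <= 1).
  by rewrite exprn_ile1.
have x_gt1 : 1 < `|x| by rewrite real_ltNge ?realE ?normr_ge0 ?ler01.
case: k => [|k]; first by rewrite !expr0 lexx.
by rewrite lt_geF ?exprVn // exprn_egt1.
Qed.

Lemma near_monomialM_small mu s E :
  `|mu| <= 1 -> coef_norm1 E <= 1 ->
  exists2 E', ('X - mu%:P) * ('X^s + E) = 'X^(s.+1) + E'
            & coef_norm1 E' <= coef_norm1 E + `|mu| *+ 2.
Proof.
move=> mu_le1 E_le1; exists (E * 'X + (- mu) *: 'X^s + (- mu) *: E).
  by rewrite -!mul_polyC exprSr; ring.
apply: le_trans (coef_norm1D _ _) _; apply: le_trans (lerD (coef_norm1D _ _) (lexx _)) _.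
rewrite !coef_norm1Z coef_norm1MX coef_norm1Xn normrN mulr1 mulr2n -addrA lerD2l lerD2l.
by rewrite ler_piMr.
Qed.

Lemma near_monomialM_large mu s E :
  mu != 0 -> coef_norm1 E <= 1 ->
  exists2 E', ('X - mu%:P) * ('X^s + E) = (- mu) *: ('X^s + E')
            & coef_norm1 E' <= coef_norm1 E + `|mu|^-1 *+ 2.
Proof.
move=> mu0 E_le1.
exists (E + (- mu^-1) *: 'X^(s.+1) + (- mu^-1) *: (E * 'X)).
  have -> : 'X - mu%:P = (- mu)%:P * (1 + (- mu^-1)%:P * 'X).
    by rewrite mulrDr mulr1 mulrA -polyCM mulrNN mulfV // mul1r polyCN addrC.
  by rewrite -!mul_polyC exprSr; ring.
apply: le_trans (coef_norm1D _ _) _; apply: le_trans (lerD (coef_norm1D _ _) (lexx _)) _.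
rewrite !coef_norm1Z coef_norm1MX coef_norm1Xn normrN normrV ?unitfE // mulr1.
by rewrite mulr2n -addrA lerD2l lerD2l ler_piMr ?invr_ge0.
Qed.

Lemma prod_XsubC_near_monomial (I : Type) (r : seq I) (f : I -> F) :
  (\sum_(i <- r) min_normV (f i)) *+ 2 <= 1 ->
  exists C s E, [/\ C != 0, \prod_(i <- r) ('X - (f i)%:P) = C *: ('X^s + E)
                  & coef_norm1 E <= (\sum_(i <- r) min_normV (f i)) *+ 2].
Proof.
elim: r => [|i r IHr].
  move=> _; exists 1, 0%N, 0; rewrite oner_neq0 !big_nil expr0 addr0 scale1r.
  by rewrite coef_norm1_0 mul0rn.
rewrite !big_cons mulrnDl => sum_le1.
have sum_r_le1 : (\sum_(j <- r) min_normV (f j)) *+ 2 <= 1.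
  by apply: le_trans sum_le1; rewrite lerDr mulrn_wge0 ?min_normV_ge0.
have [C [s [E [C0 -> E_le]]]] := IHr sum_r_le1.
have E_le1 : coef_norm1 E <= 1 := le_trans E_le sum_r_le1.
rewrite -scalerAr [min_normV _]/min_normV.
case: ifPn => [fi_le1|fi_gt1].
  have [E' -> E'_le] := near_monomialM_small s fi_le1 E_le1.
  by exists C, s.+1, E'; split=> //; apply: le_trans E'_le _; rewrite addrC lerD2l.
have fi0 : f i != 0 by apply: contraNneq fi_gt1 => ->; rewrite normr0 ler01.
have [E' -> E'_le] := near_monomialM_large s fi0 E_le1.
exists (- f i * C), s, E'; split.
- by rewrite mulf_neq0 ?oppr_eq0.
- by rewrite scalerA mulrC.
- by apply: le_trans E'_le _; rewrite addrC lerD2l.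
Qed.

Lemma near_monomial_dominant_coef C s E :
  C != 0 -> coef_norm1 E < 1 -> dominant_coef (C *: ('X^s + E)) s.
Proof.
set p := C *: _ => C0 E_lt1.
have coef_p j : p`_j = C * ((j == s)%:R + E`_j) by rewrite coefZ coefD coefXn.
have Es_lt1 : `|E`_s| < 1 := le_lt_trans (normr_coef_le_norm1 E s) E_lt1.
have ps_ge : `|C| * (1 - `|E`_s|) <= `|p`_s|.
  rewrite coef_p eqxx normrM ler_wpM2l // lerBlDr.
  by have := ler_normB (1 + E`_s) E`_s; rewrite addrK normr1.
have ps_gt0 : 0 < `|p`_s|.
  by apply: lt_le_trans ps_ge; rewrite mulr_gt0 ?normr_gt0 ?subr_gt0.
have s_lt : (s < size p)%N.
  by rewrite ltnNge; apply: contraTN ps_gt0 => /(nth_default 0) ->; rewrite normr0 ltxx.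
rewrite /dominant_coef; apply: lt_le_trans ps_ge.
have -> : \sum_(0 <= j < size p | j != s) `|p`_j|
          = `|C| * \sum_(0 <= j < size p | j != s) `|E`_j|.
  by rewrite mulr_sumr; apply: eq_bigr => j /negbTE js; rewrite coef_p js add0r normrM.
rewrite ltr_pM2l ?normr_gt0 // ltrBrDr; apply: le_lt_trans E_lt1.
apply: le_trans (sum_normr_coef_le_norm1 (size p) E).
by rewrite [leRHS](bigD1_seq s) ?mem_index_iota ?iota_uniq //= addrC.
Qed.

End NearMonomial.

Lemma bernoulli_ineq (R : numDomainType) (t : R) k :
  0 <= t -> 1 + k%:R * t <= (1 + t) ^+ k.
Proof.
move=> t_ge0; elim: k => [|k IHk]; first by rewrite mul0r addr0 expr0.
rewrite exprSr; apply: le_trans (ler_wpM2r _ IHk); last by rewrite addr_ge0.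
rewrite -subr_ge0 -natr1.
have -> : (1 + k%:R * t) * (1 + t) - (1 + (k%:R + 1) * t) = k%:R * t * t by ring.
by rewrite !mulr_ge0.
Qed.

Section Archimedean.
Variable F : archiNumFieldType.

Lemma exprn_eventually_le (r eps : F) : 0 <= r -> r < 1 -> 0 < eps ->
  exists K, forall k, (K <= k)%N -> r ^+ k <= eps.
Proof.
move=> r_ge0 r_lt1 eps_gt0; have [->|r_neq0] := eqVneq r 0.
  by exists 1%N => -[|k] // _; rewrite expr0n ltW.
have r_gt0 : 0 < r by rewrite lt_def r_neq0.
pose t := r^-1 - 1.
have t_gt0 : 0 < t by rewrite subr_gt0 invf_gt1.
have bound_ge0 : 0 <= (eps * t)^-1 by rewrite invr_ge0 ltW ?mulr_gt0.
exists (Num.bound (eps * t)^-1) => k le_bk.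
have eps_lt : eps^-1 < k%:R * t.
  rewrite -ltr_pdivrMr // -invfM.
  by apply: lt_le_trans (archi_boundP bound_ge0) _; rewrite ler_nat.
rewrite -lef_pV2 ?posrE ?exprn_gt0 // -exprVn.
have -> : r^-1 = 1 + t by rewrite addrC subrK.
apply/ltW/(lt_le_trans eps_lt)/(le_trans _ (bernoulli_ineq k (ltW t_gt0))).
by rewrite lerDr.
Qed.

Lemma exists_exprn_sum_min_normV_lt (I : finType) (f : I -> F) (eps : F) :
  (forall i, `|f i| != 1) -> 0 < eps ->
  exists k, \sum_i min_normV (f i ^+ k) < eps.
Proof.
move=> f_ne1 eps_gt0; pose delta := eps / #|I|.+1%:R.
have delta_gt0 : 0 < delta by rewrite divr_gt0 ?ltr0Sn.
have /fin_all_exists [K le_K] i : exists K, forall k, (K <= k)%N ->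
    min_normV (f i) ^+ k <= delta.
  by apply: exprn_eventually_le; rewrite ?min_normV_ge0 ?min_normV_lt1.
exists (\max_i K i); apply: (@le_lt_trans _ _ (delta *+ #|I|)).
  rewrite -sumr_const; apply: ler_sum => i _; rewrite min_normVX.
  exact/le_K/leq_bigmax.
by rewrite /delta -mulr_natr mulrAC ltr_pdivrMr ?ltr0Sn // ltr_pM2l // ltr_nat.
Qed.

End Archimedean.

Section DominantAnnihilator.
Variables (R : numDomainType) (n : nat) (L : 'cV[int]_n.+1 -> R).
Hypothesis L_ge0 : forall w, 0 <= L w.
Hypothesis L_scale : forall (c : int) w, L (c *: w) = `|c|%:~R * L w.
Hypothesis L_add : forall w u, L (w + u) <= L w + L u.

Lemma seminorm_exp_invariant (B : 'M[int]_n.+1) :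
  (forall w, L (B *m w) = L w) -> forall j w, L (B ^+ j *m w) = L w.
Proof.
move=> L_B; elim=> [|j IHj] w; first by rewrite expr0 mul1mx.
by rewrite exprS -mulmxE -mulmxA L_B.
Qed.

Lemma seminorm_sum (I : Type) (r : seq I) (P : pred I) (f : I -> 'cV[int]_n.+1) :
  L (\sum_(i <- r | P i) f i) <= \sum_(i <- r | P i) L (f i).
Proof.
apply: (big_ind2 (fun w x => L w <= x)) => //; last first.
  by move=> w1 w2 x1 x2 le1 le2; apply: le_trans (L_add _ _) (lerD le1 le2).
by rewrite -(scale0r (0 : 'cV[int]_n.+1)) L_scale normr0 mul0r.
Qed.

Lemma seminorm_eq0_of_dominant_annihilator (B : 'M[int]_n.+1) (p : {poly int}) s v :
  (forall w, L (B *m w) = L w) -> horner_mx B p = 0 -> dominant_coef p s ->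
  L v = 0.
Proof.
move=> /seminorm_exp_invariant L_Bj pB0 dom_ps.
have s_lt := dominant_coef_size dom_ps.
have sum0 : \sum_(0 <= j < size p) p`_j *: (B ^+ j *m v) = 0.
  rewrite -[RHS](mul0mx _ v) -pB0 -[p in horner_mx B p]coefK poly_def.
  rewrite raddf_sum /= mulmx_suml big_mkord; apply: eq_bigr => j _.
  by rewrite horner_mxZ rmorphXn /= horner_mx_X scalemxAl.
move: sum0; rewrite (bigD1_seq s) ?mem_index_iota ?iota_uniq //= => /eqP.
rewrite addr_eq0 => /eqP dom_term.
have : `|p`_s|%:~R * L v <= (\sum_(0 <= j < size p | j != s) `|p`_j|)%:~R * L v.
  rewrite -{1}(L_Bj s) -L_scale dom_term -scaleN1r L_scale normrN1 mul1r.
  apply: le_trans (seminorm_sum _ _ _) _.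
  rewrite rmorph_sum mulr_suml; apply: ler_sum => j _.
  by rewrite L_scale L_Bj.
move=> le_ps; apply/eqP; apply: contraTT le_ps => Lv_neq0.
by rewrite ler_pM2r ?lt_def ?Lv_neq0 ?L_ge0 // ler_int (lt_geF dom_ps).
Qed.

End DominantAnnihilator.

Section SemidirectProduct.
Variables (n : nat) (A : 'M[int]_n).
Implicit Types (w u : 'cV[int]_n).

Lemma sdp_mul_vec w u : sdp_mul A (w, 0) (u, 0) = (w + u, 0).
Proof. by rewrite /sdp_mul /= mul1mx. Qed.

Lemma sdp_pow_vec w (c : int) : sdp_pow A (w, 0) c = (c *: w, 0).
Proof.
have iter_vec u m : iter m (sdp_mul A (u, 0)) (sdp_one n) = (m%:Z *: u, 0).
  by elim: m => [|m IHm]; rewrite ?scale0r //= IHm sdp_mul_vec intS scalerDl scale1r.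
case: c => m; first exact: iter_vec.
have inv_vec : sdp_inv A (w, 0) = (- w, 0) by rewrite /sdp_inv /= mul1mx oppr0.
by rewrite /sdp_pow inv_vec iter_vec NegzE scaleNr scalerN.
Qed.

Lemma sdp_conj_gen w :
  sdp_mul A (sdp_mul A (0, 1) (w, 0)) (sdp_inv A (0, 1)) = (A *m w, 0).
Proof.
by rewrite /sdp_mul /sdp_inv /= !mulmx1 !mulmx0 oppr0 mulmx0 add0r addr0 subrr.
Qed.

Variables (R : realType) (l : sdp n -> R).
Hypothesis lenl : length_function A l.

Lemma length_vec_ge0 w : 0 <= l (w, 0).
Proof. by case: lenl. Qed.

Lemma length_vec_scale (c : int) w : l (c *: w, 0) = `|c|%:~R * l (w, 0).
Proof. by case: lenl => _ l_pow _ _; rewrite -sdp_pow_vec l_pow. Qed.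

Lemma length_vec_add w u : l (w + u, 0) <= l (w, 0) + l (u, 0).
Proof.
case: lenl => _ _ _ l_comm; rewrite -sdp_mul_vec; apply: l_comm.
by rewrite !sdp_mul_vec addrC.
Qed.

Lemma length_vec_mulmx w : l (A *m w, 0) = l (w, 0).
Proof. by case: lenl => _ _ l_conj _; rewrite -sdp_conj_gen l_conj. Qed.

End SemidirectProduct.

Lemma char_poly_conj (R : comUnitRingType) n (P M : 'M[R]_n) :
  P \in unitmx -> char_poly (invmx P *m M *m P) = char_poly M.
Proof.
move=> P_unit; rewrite /char_poly /char_poly_mx.
set Q := map_mx polyC P; set Qi := map_mx polyC (invmx P).
have QiQ : Qi *m Q = 1%:M by rewrite -map_mxM mulVmx // map_mx1.
have -> : 'X%:M - map_mx polyC (invmx P *m M *m P)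
          = Qi *m ('X%:M - map_mx polyC M) *m Q.
  rewrite mulmxBr mulmxBl !map_mxM -/Qi -/Q scalar_mxC.
  by rewrite -[('X%:M *m Qi) *m Q]mulmxA QiQ mulmx1.
by rewrite !det_mulmx mulrAC -det_mulmx QiQ det1 mul1r.
Qed.

Lemma diag_mx_exp (R : pzRingType) n (d : 'rV[R]_n.+1) k :
  diag_mx d ^+ k = diag_mx (\row_j d 0 j ^+ k).
Proof.
elim: k => [|k IHk].
  by rewrite expr0; apply/matrixP => i j; rewrite !mxE.
rewrite exprS IHk -mulmxE mulmx_diag; congr diag_mx.
by apply/rowP => j; rewrite !mxE exprS.
Qed.

Lemma diagonalizable_char_poly_exp (F : fieldType) n (M : 'M[F]_n.+1) :
  diagonalizable M ->
  exists d : 'rV[F]_n.+1,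
    forall k, char_poly (M ^+ k) = \prod_j ('X - (d 0 j ^+ k)%:P).
Proof.
case=> P P_unit /(diagonalizable_forLR P_unit) [d ->]; exists d => k.
have conj_exp : (invmx P *m diag_mx d *m P) ^+ k = invmx P *m diag_mx d ^+ k *m P.
  elim: k => [|k IHk]; first by rewrite !expr0 mulmx1 mulVmx.
  by rewrite !exprS IHk -!mulmxE !mulmxA mulmxK.
rewrite mxpoly.conjVmx // conj_exp char_poly_conj // diag_mx_exp.
by rewrite char_poly_trig ?diag_mx_is_trig //; apply: eq_bigr => j _; rewrite !mxE eqxx.
Qed.

Lemma mxC_exp n (A : 'M[int]_n.+1) k : mxC (A ^+ k) = mxC A ^+ k.
Proof. by rewrite /mxC rmorphXn. Qed.

Lemma length_vec_eq0 (R : realType) n (A : 'M[int]_n.+1) (l : sdp n.+1 -> R)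
    (p : {poly int}) k s v :
  length_function A l -> horner_mx (A ^+ k) p = 0 -> dominant_coef p s ->
  l (v, 0) = 0.
Proof.
move=> lenl pAk0 dom_ps.
apply: (seminorm_eq0_of_dominant_annihilator (L := fun w => l (w, 0))) pAk0 dom_ps.
- exact: length_vec_ge0 lenl.
- exact: length_vec_scale lenl.
- exact: length_vec_add lenl.
- exact: seminorm_exp_invariant (length_vec_mulmx lenl) k.
Qed.

Theorem lemma8 (R : realType) (n : nat) (A : 'M[int]_n) :
  A \in unitmx ->
  diagonalizable (mxC A) ->
  (forall a : algC, eigenvalue (mxC A) a -> `|a| != 1) ->
  forall l : sdp n -> R, length_function A l ->
  forall v : 'cV[int]_n, l (v, 0) = 0.
Proof.
move=> _; case: n A => [|n] A diagA eig_ne1 l lenl v.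
  by rewrite flatmx0; have := length_vec_scale lenl 0 0; rewrite scale0r normr0 mul0r.
have [d char_exp] := diagonalizable_char_poly_exp diagA.
have d_ne1 j : `|d 0 j| != 1.
  apply: eig_ne1; rewrite eigenvalue_root_char -[mxC A]expr1 char_exp.
  by rewrite /root horner_prod (bigD1 j) //= hornerXsubC expr1 subrr mul0r.
have half_gt0 : 0 < 2^-1 :> algC by rewrite invr_gt0 ltr0n.
have [k sum_lt] := exists_exprn_sum_min_normV_lt d_ne1 half_gt0.
have sum2_lt1 : (\sum_j min_normV (d 0 j ^+ k)) *+ 2 < 1.
  by rewrite -mulr_natr -ltr_pdivlMr ?ltr0n // mul1r.
have [C [s [E [C0 prodE E_le]]]] := prod_XsubC_near_monomial (ltW sum2_lt1).
have : dominant_coef (char_poly (mxC A ^+ k)) s.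
  by rewrite char_exp prodE near_monomial_dominant_coef // (le_lt_trans E_le).
rewrite -mxC_exp -map_char_poly dominant_coef_map_int => dom.
exact: length_vec_eq0 lenl (Cayley_Hamilton _) dom.
Qed.
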